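(* Let $\Lambda\subset Y$ satisfy condition (★), let $J$ be generic as in the context, and let $e\ge2$ be an integer with $|a|\ge e$ for every Reeb chord $a$ of $\Lambda$. Then for every integer $p$ with $1\le p\le 3e-1$, $$\dim_{\mathbb{Z}/2}\mathrm{LCH}_p(\Lambda)=\dim\ker\big((\delta_J)_*:HL_p(\Lambda)\to HL^2_{p-1}(\Lambda)\big)+\dim\operatorname{coker}\big((\delta_J)_*:HL_{p+1}(\Lambda)\to HL^2_p(\Lambda)\big).$$
   Context: Let $(Y,\alpha)$ be a $(2n-1)$-dimensional contact manifold with a diffeomorphism $Y\cong\mathbb{R}\times P$ pulling back $dz+\lambda_P$ to $\alpha$, where $(P,\lambda_P)$ is the completion of a compact Liouville domain with $2c_1(TP)=0$ and $H_1(P;\mathbb{Z})=0$. Let $\Lambda\subset Y$ be a compact connected Legendrian submanifold with vanishing Maslov class, all Reeb chords non-degenerate, each Reeb chord $a$ graded by $|a|=\mu(a)-1$ ($\mu$ the Conley–Zehnder index defined via capping paths in $\Lambda$). For a generic almost complex structure $J$ on $\mathbb{R}\times Y$ that is compatible with $d(e^r\alpha)$, $\mathbb{R}$-invariant, preserves $\xi=\ker\alpha$, sends $\partial_r$ to the Reeb vector field, and equals a fixed such structure outside a compact set, $\mathcal{M}_J(a;b_1,\dots,b_m)$ denotes the moduli space, modulo $\mathbb{R}$-translation and conformal reparametrization, of $J$-holomorphic disks with boundary punctures $p_0,\dots,p_m$ (clockwise) and boundary on $\mathbb{R}\times\Lambda$, positively asymptotic at $p_0$ to the strip over $a$ and negatively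 asymptotic at $p_k$ to the strip over $b_k$; for $(b_1,\dots,b_m)\ne(a)$ it is a manifold of dimension $|a|-1-\sum_k|b_k|$, compact when $0$-dimensional. The Chekanov–Eliashberg DGA $(\mathcal{A}_*(\Lambda),\partial_J)$ is the unital free noncommutative graded $\mathbb{Z}/2$-algebra on the Reeb chords with $\partial_J a=\sum_{m\ge0}\sum_{|b_1|+\dots+|b_m|=|a|-1}\#_{\mathbb{Z}/2}\mathcal{M}_J(a;b_1,\dots,b_m)\,b_1\cdots b_m$, extended by the Leibniz rule; $\partial_J^2=0$; $\mathrm{LCH}_*(\Lambda)$ is its homology. Condition (★): $|a|\ge2$ for every Reeb chord $a$ of $\Lambda$ that is homotopic, through paths with endpoints in $\Lambda$, to a constant path in $\Lambda$. Under (★): $CL_*(\Lambda)$ is the graded $\mathbb{Z}/2$-vector space spanned by the Reeb chords ($a$ in degree $|a|$), $d_Ja=\sum_{|b|=|a|-1}\#_{\mathbb{Z}/2}\mathcal{M}_J(a;b)\,b$, and $\delta_Ja=\sum_{|b_1|+|b_2|=|a|-1}\#_{\mathbb{Z}/2}\mathcal{M}_J(a;b_1,b_2)\,b_1\otimes b_2$; then $d_J^2=0$ and $\delta_J:CL_{*+1}(\Lambda)\to(CL(\Lambda)^{\otimes2})_*$ is a chain map, where $CL^{\otimes2}$ carries $d_J\otimes\mathrm{id}+\mathrm{id}\otimes d_J$. $HL_*(\Lambda)$ is the homology of $(CL_*(\Lambda),d_J)$, $HL^2_*(\Lambda)$ that of $CL^{\otimes2}$, and $(\delta_J)_*:HL_{*+1}(\Lambda)\to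 HL^2_*(\Lambda)$ the induced map. *)

From HB Require Import structures.
From mathcomp Require Import all_boot all_order all_algebra.
Set Implicit Arguments.
Unset Strict Implicit.
Unset Printing Implicit Defensive.
Import GRing.Theory.
Local Open Scope ring_scope.

Section LCH.
(* A   : the (finite) set of Reeb chords of Lambda
   g   : the grading a |-> |a|
   c a w : the mod-2 count #M_J(a; b_1,...,b_m) for the word w = b_1...b_m *)
Variables (A : finType) (g : A -> nat) (c : A -> seq A -> bool).

Definition weight (w : seq A) : nat := \sum_(a <- w) g a.

Fixpoint wordsLen (k : nat) : seq (seq A) :=
  if k is k'.+1 then [seq a :: w | a <- enum A, w <- wordsLen k'] else [:: [::]].

(* basis of the degree-p part of A_*(Lambda): words of total degree p
   (of length <= p; these are all of them since every |a| >= 1 under the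
   hypotheses of the theorem) *)
Definition words (p : nat) : seq (seq A) :=
  [seq w <- flatten [seq wordsLen k | k <- iota 0 p.+1] | weight w == p].
(* basis of CL_p (single chords) and of (CL^{(x)2})_p (pairs b1 (x) b2) *)
Definition words1 (p : nat) := [seq w <- words p | size w == 1%N].
Definition words2 (p : nat) := [seq w <- words p | size w == 2%N].

(* coefficient of the word w in partial_J a: counted only when
   |b_1|+...+|b_m| = |a| - 1 *)
Definition cnt (a : A) (w : seq A) : 'F_2 :=
  (((weight w).+1 == g a) && c a w)%:R.

(* coefficient of v in partial_J u (Leibniz rule):
   sum over decompositions u = x a y, v = x w y of cnt a w *)
Definition dcoef (u v : seq A) : 'F_2 :=
  \sum_(i < size u)
    match drop i u with
    | a :: y =>
      \sum_(j < (size v).+1) \sum_(l < (size v).+1)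
        ((take i u == take j v) && (j + l <= size v)%N
           && (y == drop (j + l) v))%:R * cnt a (take l (drop j v))
    | [::] => 0
    end.

(* matrices act on row vectors: x *m M *)
Definition Dfull (p q : nat) : 'M['F_2]_(size (words p), size (words q)) :=
  \matrix_(i, j) dcoef (nth [::] (words p) i) (nth [::] (words q) j).

Definition d1coef (u v : seq A) : 'F_2 :=
  match u, v with [:: a], [:: b] => cnt a [:: b] | _, _ => 0 end.
Definition dJ (p q : nat) : 'M['F_2]_(size (words1 p), size (words1 q)) :=
  \matrix_(i, j) d1coef (nth [::] (words1 p) i) (nth [::] (words1 q) j).

Definition d2coef (u v : seq A) : 'F_2 :=
  match u, v with
  | [:: a1; a2], [:: b1; b2] =>
      (a2 == b2)%:R * cnt a1 [:: b1] + (a1 == b1)%:R * cnt a2 [:: b2]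
  | _, _ => 0
  end.
Definition dJ2 (p q : nat) : 'M['F_2]_(size (words2 p), size (words2 q)) :=
  \matrix_(i, j) d2coef (nth [::] (words2 p) i) (nth [::] (words2 q) j).

Definition deltacoef (u v : seq A) : 'F_2 :=
  match u, v with [:: a], [:: b1; b2] => cnt a [:: b1; b2] | _, _ => 0 end.
Definition deltaJ (p q : nat) : 'M['F_2]_(size (words1 p), size (words2 q)) :=
  \matrix_(i, j) deltacoef (nth [::] (words1 p) i) (nth [::] (words2 q) j).

(* dimension of homology ker Out / im In *)
Definition hdim m n k (In : 'M['F_2]_(m, n)) (Out : 'M['F_2]_(n, k)) : nat :=
  (\rank (kermx Out) - \rank In)%N.

Definition LCHdim (p : nat) : nat := hdim (Dfull p.+1 p) (Dfull p p.-1).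

(* Z = cycles in CL_s, B = boundaries in CL_s, B2 = boundaries in CL^2_{s-1},
   Z2 = cycles in CL^2_{s-1}.
   dim ker  = dim {z in Z | delta z in B2} - dim B
   dim coker = dim Z2 - dim (delta Z + B2). *)
Definition kerDelta (s : nat) : nat :=
  let Z := kermx (dJ s s.-1) in
  let B := dJ s.+1 s in
  let B2 := dJ2 s s.-1 in
  (\rank (kermx (Z *m deltaJ s s.-1 *m cokermx B2) *m Z) - \rank B)%N.

Definition cokerDelta (s : nat) : nat :=
  let Z := kermx (dJ s s.-1) in
  let B2 := dJ2 s s.-1 in
  let Z2 := kermx (dJ2 s.-1 s.-2) in
  (\rank Z2 - \rank (Z *m deltaJ s s.-1 + B2)%MS)%N.

End LCH.

(* Since every chord has degree at least e >= 2, a word of degree p <= 3e - 1 has one or two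
   letters, so in these degrees the Chekanov-Eliashberg algebra is CL_p (+) (CL^(x)2)_p; in
   degree p + 1 there are also three-letter words, but no chord has degree 1, so the Leibniz
   differential cannot shorten a word by two letters and their boundaries vanish in degree p.
   In this splitting the differential is block triangular with diagonal blocks d_J and
   d_J (x) 1 + 1 (x) d_J and off-diagonal block delta_J: the algebra is the mapping cone of
   delta_J in this range.  Projecting cycles and boundaries onto the CL-summand and applying
   rank-nullity splits dim LCH_p into the kernel of (delta_J)_* on HL_p and the cokernel of
   (delta_J)_* on HL_(p+1). *)

From mathcomp Require Import all_boot all_order all_algebra.
From mathcomp Require Import zify.
Import GRing.Theory.
Local Open Scope ring_scope.

Set Implicit Arguments.
Unset Strict Implicit.
Unset Printing Implicit Defensive.

Section OrthPair.
Variables (R : pzRingType) (m n1 n2 : nat) (E1 : 'M[R]_(n1, m)) (E2 : 'M[R]_(n2, m)).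

Definition orth_pair :=
  [/\ E1 *m E1^T = 1%:M, E2 *m E2^T = 1%:M, E1 *m E2^T = 0 & E2 *m E1^T = 0].

Hypothesis orthE : orth_pair.

Lemma orth_pair_mulmx1 k (x : 'M_(k, n1)) y : (x *m E1 + y *m E2) *m E1^T = x.
Proof.
by case: orthE => e11 _ _ e21; rewrite mulmxDl -!mulmxA e11 e21 mulmx0 addr0 mulmx1.
Qed.

Lemma orth_pair_mulmx2 k (x : 'M_(k, n1)) y : (x *m E1 + y *m E2) *m E2^T = y.
Proof.
by case: orthE => _ e22 e12 _; rewrite mulmxDl -!mulmxA e22 e12 mulmx0 add0r mulmx1.
Qed.

Lemma orth_pair_eq0 k (x : 'M_(k, n1)) y : x *m E1 + y *m E2 = 0 -> x = 0 /\ y = 0.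
Proof.
move=> xy0; split; first by rewrite -(orth_pair_mulmx1 x y) xy0 mul0mx.
by rewrite -(orth_pair_mulmx2 x y) xy0 mul0mx.
Qed.

End OrthPair.

Section Ranks.
Variable F : fieldType.

Lemma row_free_mul_tr m n (E : 'M[F]_(m, n)) : E *m E^T = 1%:M -> row_free E.
Proof. by move=> EE; apply/row_freeP; exists E^T. Qed.

Lemma mxrank_split_ker m n1 n2 k k1 k2 (E1 : 'M[F]_(n1, m)) (E2 : 'M[F]_(n2, m))
    (X : 'M_(k, m)) (Y1 : 'M_(k1, n1)) (Y2 : 'M_(k2, n2)) :
  row_free E2 -> (X *m E1^T == Y1)%MS -> (X :&: kermx E1^T == Y2 *m E2)%MS ->
  \rank X = (\rank Y1 + \rank Y2)%N.
Proof.
move=> freeE2 /eqmx_rank <- /eqmx_rank.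
by rewrite mxrankMfree // => <-; rewrite mxrank_mul_ker.
Qed.

Definition preim_mx m n k (Z : 'M[F]_(m, n)) (M : 'M_(n, k)) p (B : 'M_(p, k)) :=
  kermx (Z *m M *m cokermx B) *m Z.

Lemma sub_preim_mx m n k p q (Z : 'M[F]_(m, n)) (M : 'M_(n, k)) (B : 'M_(p, k))
    (x : 'M_(q, n)) :
  (x <= preim_mx Z M B)%MS = (x <= Z)%MS && (x *m M <= B)%MS.
Proof.
rewrite /preim_mx; set N := Z *m M *m cokermx B.
apply/idP/andP => [/submxP [v ->] | [/submxP [u ->]]].
  split; first by rewrite mulmxA submxMl.
  rewrite submxE; have -> : v *m (kermx N *m Z) *m M *m cokermx B = v *m (kermx N *m N).
    by rewrite /N !mulmxA.
  by rewrite mulmx_ker mulmx0.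
rewrite submxE => /eqP uN; apply: submxMr; apply/sub_kermxP.
by rewrite /N mulmxA (mulmxA u).
Qed.

End Ranks.

(* D : C_p -> C_(p-1) and Ds : C_(p+1) -> C_p are written in coordinate projections E, F, G
   onto two summands; only the splitting of C_p has to be complete, while in degree p + 1 it
   suffices that the two summands carry the whole image of Ds. *)
Section BlockComplex.
Variables (F : fieldType) (m0 m m' n1 n2 k1 k2 l1 l2 : nat).
Variables (D : 'M[F]_(m, m0)) (Ds : 'M[F]_(m', m)).
Variables (E1 : 'M[F]_(n1, m)) (E2 : 'M[F]_(n2, m)).
Variables (F1 : 'M[F]_(k1, m0)) (F2 : 'M[F]_(k2, m0)).
Variables (G1 : 'M[F]_(l1, m')) (G2 : 'M[F]_(l2, m')).
Variables (d : 'M[F]_(n1, k1)) (de : 'M[F]_(n1, k2)) (d2 : 'M[F]_(n2, k2)).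
Variables (ds : 'M[F]_(l1, n1)) (des : 'M[F]_(l1, n2)) (d2s : 'M[F]_(l2, n2)).
Hypotheses (orthE : orth_pair E1 E2) (spanE : E1^T *m E1 + E2^T *m E2 = 1%:M).
Hypothesis orthF : orth_pair F1 F2.
Hypotheses (blockD1 : E1 *m D = d *m F1 + de *m F2) (blockD2 : E2 *m D = d2 *m F2).
Hypotheses (blockDs1 : G1 *m Ds = ds *m E1 + des *m E2) (blockDs2 : G2 *m Ds = d2s *m E2).
Hypothesis spanDs : (Ds <= G1 *m Ds + G2 *m Ds)%MS.
Hypothesis DsD : Ds *m D = 0.

Lemma coordE k (x : 'M_(k, m)) : x = x *m E1^T *m E1 + x *m E2^T *m E2.
Proof. by rewrite -!mulmxA -mulmxDr spanE mulmx1. Qed.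

Lemma mulmx_blockD k (x : 'M_(k, m)) :
  x *m D = (x *m E1^T *m d) *m F1 + (x *m E1^T *m de + x *m E2^T *m d2) *m F2.
Proof.
rewrite {1}(coordE x) [LHS]mulmxDl -!mulmxA blockD1 blockD2.
by rewrite !mulmxDr mulmxDl !mulmxA addrA.
Qed.

Lemma block_complex : [/\ ds *m d = 0, ds *m de + des *m d2 = 0 & d2s *m d2 = 0].
Proof.
have [dsd dsde] : ds *m d = 0 /\ ds *m de + des *m d2 = 0.
  apply: (orth_pair_eq0 orthF).
  have := mulmx_blockD (G1 *m Ds); rewrite -(mulmxA G1) DsD mulmx0 blockDs1.
  by rewrite orth_pair_mulmx1 // orth_pair_mulmx2.
split=> //; have f22 : F2 *m F2^T = 1%:M by case: orthF.
have : d2s *m d2 *m F2 = 0.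
  by rewrite -mulmxA -blockD2 mulmxA -blockDs2 -mulmxA DsD mulmx0.
by move/(congr1 (mulmx^~ F2^T)); rewrite /= -mulmxA f22 mulmx1 mul0mx.
Qed.

Lemma mxrank_kermx_block :
  \rank (kermx D) = (\rank (preim_mx (kermx d) de d2) + \rank (kermx d2))%N.
Proof.
have [_ e22 _ e21] := orthE.
apply: (mxrank_split_ker (E1 := E1) (row_free_mul_tr e22)); apply/andP; split.
- have := mulmx_blockD (kermx D); rewrite mulmx_ker => /esym/(orth_pair_eq0 orthF).
  case=> /sub_kermxP Kd /eqP; rewrite addr_eq0 => /eqP Kde.
  by rewrite sub_preim_mx Kd Kde -mulNmx submxMl.
- set K := preim_mx _ _ _.
  have /andP [/sub_kermxP Kd /submxP [W KW]] : (K <= kermx d)%MS && (K *m de <= d2)%MS.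
    by rewrite -sub_preim_mx.
  rewrite -[K](orth_pair_mulmx1 orthE K (- W)); apply/submxMr/sub_kermxP.
  rewrite mulmx_blockD orth_pair_mulmx1 // orth_pair_mulmx2 // Kd KW.
  by rewrite mulNmx addrN !mul0mx addr0.
- set I := (_ :&: _)%MS.
  have /andP [/sub_kermxP ID /sub_kermxP IE] : (I <= kermx D)%MS && (I <= kermx E1^T)%MS.
    by rewrite -sub_capmx.
  rewrite (coordE I) IE mul0mx add0r; apply/submxMr/sub_kermxP.
  move: ID; rewrite mulmx_blockD IE => /(orth_pair_eq0 orthF) [_].
  by rewrite mul0mx add0r.
- rewrite sub_capmx; apply/andP; split; apply/sub_kermxP.
    by rewrite -mulmxA blockD2 mulmxA mulmx_ker mul0mx.
  by rewrite -mulmxA e21 mulmx0.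
Qed.

Lemma mxrank_block_image :
  \rank Ds = (\rank ds + \rank (kermx ds *m des + d2s)%MS)%N.
Proof.
have [_ e22 _ e21] := orthE.
have G2DsE1 : G2 *m Ds *m E1^T = 0 by rewrite blockDs2 -mulmxA e21 mulmx0.
apply: (mxrank_split_ker (E1 := E1) (row_free_mul_tr e22)); apply/andP; split.
- case/sub_addsmxP: spanDs => u ->.
  rewrite mulmxDl -(mulmxA u.2) G2DsE1 mulmx0 addr0 -mulmxA blockDs1.
  by rewrite orth_pair_mulmx1 // submxMl.
- by rewrite -(orth_pair_mulmx1 orthE ds des) -blockDs1 submxMr ?submxMl.
- set I := (_ :&: _)%MS.
  have /andP [IDs /sub_kermxP IE] : (I <= Ds)%MS && (I <= kermx E1^T)%MS.
    by rewrite -sub_capmx.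
  case/sub_addsmxP: (submx_trans IDs spanDs) => v Iv.
  have {}Iv : I = (v.1 *m ds) *m E1 + (v.1 *m des + v.2 *m d2s) *m E2.
    by rewrite Iv blockDs1 blockDs2 mulmxDr mulmxDl !mulmxA addrA.
  have /submxP [w v1w] : (v.1 <= kermx ds)%MS.
    apply/sub_kermxP.
    by rewrite -(orth_pair_mulmx1 orthE (v.1 *m ds) (v.1 *m des + v.2 *m d2s)) -Iv.
  rewrite Iv v1w -(mulmxA w) mulmx_ker mulmx0 mul0mx add0r; apply: submxMr.
  by rewrite -mulmxA addmx_sub_adds ?submxMl.
- set S := (_ + _)%MS; case/sub_addsmxP: (submx_refl S) => u Su.
  rewrite sub_capmx; apply/andP; split; last first.
    by apply/sub_kermxP; rewrite -mulmxA e21 mulmx0.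
  have -> : S *m E2 = (u.1 *m kermx ds) *m (G1 *m Ds) + u.2 *m (G2 *m Ds).
    rewrite {1}Su blockDs1 blockDs2 mulmxDr (mulmxA _ ds) -(mulmxA u.1) mulmx_ker.
    by rewrite mulmx0 mul0mx add0r mulmxDl !mulmxA.
  by rewrite addmx_sub ?(submx_trans (submxMl _ _)) ?submxMl.
Qed.

Theorem mxrank_homology_block :
  (\rank (kermx D) - \rank Ds =
   (\rank (preim_mx (kermx d) de d2) - \rank ds) +
   (\rank (kermx d2) - \rank (kermx ds *m des + d2s)%MS))%N.
Proof.
have [dsd dsde d2sd2] := block_complex.
(* The two rank inequalities below make the truncated subtractions exact. *)
have dsdeN : ds *m de = - (des *m d2) by apply/eqP; rewrite -addr_eq0 dsde.
have desd2N : des *m d2 = - (ds *m de) by apply/eqP; rewrite -addr_eq0 addrC dsde.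
have dsK : (\rank ds <= \rank (preim_mx (kermx d) de d2))%N.
  apply/mxrankS; rewrite sub_preim_mx; apply/andP; split; first exact/sub_kermxP.
  by rewrite dsdeN -mulNmx submxMl.
have SK : (\rank (kermx ds *m des + d2s)%MS <= \rank (kermx d2))%N.
  apply/mxrankS; rewrite addsmx_sub; apply/andP; split; apply/sub_kermxP => //.
  by rewrite -mulmxA desd2N mulmxN mulmxA mulmx_ker mul0mx oppr0.
rewrite mxrank_kermx_block mxrank_block_image; lia.
Qed.

End BlockComplex.

Lemma sum_nth_eq (T : eqType) (R : pzRingType) (x0 x : T) (s : seq T) (f : T -> R) :
  uniq s ->
  \sum_(k < size s) (x == nth x0 s k)%:R * f (nth x0 s k) = if x \in s then f x else 0.
Proof.
rewrite -(big_mkord xpredT (fun k => (x == nth x0 s k)%:R * f (nth x0 s k))).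
rewrite -(big_nth x0 xpredT (fun y => (x == y)%:R * f y)).
elim: s => [|y s IH] /=; first by rewrite big_nil.
case/andP=> ys us; rewrite big_cons IH // in_cons.
case: (eqVneq x y) => [->|_] /=; last by rewrite mul0r add0r.
by rewrite (negbTE ys) mul1r addr0.
Qed.

Section Selection.
Variables (T : eqType) (R : pzRingType) (x0 : T) (s : seq T).
Hypothesis s_uniq : uniq s.

Definition selmx (P : pred T) : 'M[R]_(size (filter P s), size s) :=
  \matrix_(i, j) (nth x0 (filter P s) i == nth x0 s j)%:R.

Lemma mem_nth_filter P (i : 'I_(size (filter P s))) :
  P (nth x0 (filter P s) i) && (nth x0 (filter P s) i \in s).
Proof. by rewrite -mem_filter mem_nth. Qed.

Lemma mul_selmx_mx P n (f : T -> 'I_n -> R) :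
  selmx P *m \matrix_(k, j) f (nth x0 s k) j = \matrix_(i, j) f (nth x0 (filter P s) i) j.
Proof.
apply/matrixP => i j; rewrite !mxE.
under eq_bigr => k _ do rewrite !mxE.
by case/andP: (mem_nth_filter i) => _ si; rewrite (sum_nth_eq _ _ (f^~ j)) // si.
Qed.

Lemma mul_mx_selmx P n (f : 'I_n -> T -> R) :
  \matrix_(i, l) f i (nth x0 (filter P s) l) *m selmx P =
  \matrix_(i, k) if P (nth x0 s k) then f i (nth x0 s k) else 0.
Proof.
apply/matrixP => i k; rewrite !mxE.
under eq_bigr => l _ do rewrite !mxE mulr_natr -mulr_natl eq_sym.
by rewrite (sum_nth_eq _ _ (f i)) ?filter_uniq // mem_filter mem_nth ?andbT.
Qed.

Lemma selmx_mul_tr P Q :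
  selmx Q *m (selmx P)^T =
  \matrix_(i, k) (nth x0 (filter P s) k == nth x0 (filter Q s) i)%:R.
Proof.
rewrite -(mul_selmx_mx Q (fun y k => (nth x0 (filter P s) k == y)%:R)).
by congr (_ *m _); apply/matrixP => j k; rewrite !mxE.
Qed.

Lemma orth_pair_selmx (P Q : pred T) :
  {in s, forall x, P x -> ~~ Q x} -> orth_pair (selmx P) (selmx Q).
Proof.
move=> PQ; have selmx_id S : selmx S *m (selmx S)^T = 1%:M.
  rewrite selmx_mul_tr; apply/matrixP => i k; rewrite !mxE.
  by rewrite nth_uniq ?filter_uniq // eq_sym.
have selmx_orth (S S' : pred T) :
    {in s, forall x, S x -> ~~ S' x} -> selmx S *m (selmx S')^T = 0.
  move=> SS'; rewrite selmx_mul_tr; apply/matrixP => i k; rewrite !mxE.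
  case/andP: (mem_nth_filter i) (mem_nth_filter k) => Si si /andP [S'k _].
  by case: eqP => // eik; move: S'k; rewrite eik (negbTE (SS' _ si Si)).
split; rewrite ?selmx_id ?selmx_orth //.
by move=> x xs; apply: contraL; apply: PQ.
Qed.

Lemma selmx_span (P Q : pred T) : {in s, forall x, Q x = ~~ P x} ->
  (selmx P)^T *m selmx P + (selmx Q)^T *m selmx Q = 1%:M.
Proof.
move=> PQ; have tr_selmx_mul S : (selmx S)^T *m selmx S =
    \matrix_(j, k) if S (nth x0 s k) then (nth x0 s k == nth x0 s j)%:R else 0.
  rewrite -(mul_mx_selmx S (fun j y => (y == nth x0 s j)%:R)).
  by congr (_ *m _); apply/matrixP => j l; rewrite !mxE.
apply/matrixP => j k; rewrite !tr_selmx_mul !mxE PQ ?mem_nth // nth_uniq // eq_sym.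
by case: (P _); rewrite ?addr0 ?add0r.
Qed.

End Selection.

Arguments selmx {T R} x0 s P.

Lemma row_sub_mul_selmx (T : eqType) (F : fieldType) (x0 : T) (s : seq T) (P : pred T)
    n (f : T -> 'I_n -> F) (i : 'I_(size s)) :
  uniq s -> P (nth x0 s i) ->
  (row i (\matrix_(k, j) f (nth x0 s k) j)
     <= selmx x0 s P *m \matrix_(k, j) f (nth x0 s k) j)%MS.
Proof.
move=> us Pi; rewrite mul_selmx_mx //.
have si : nth x0 s i \in filter P s by rewrite mem_filter Pi mem_nth.
have k_lt : (index (nth x0 s i) (filter P s) < size (filter P s))%N by rewrite index_mem.
suff -> : row i (\matrix_(k, j) f (nth x0 s k) j)
          = row (Ordinal k_lt) (\matrix_(l, j) f (nth x0 (filter P s) l) j).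
  exact: row_sub.
by apply/rowP => j; rewrite !mxE nth_index.
Qed.

Section Words.
Variables (A : finType) (g : A -> nat).

Lemma size_wordsLen k w : w \in wordsLen A k -> size w = k.
Proof.
elim: k w => [|k IH] w /=; first by rewrite mem_seq1 => /eqP ->.
by case/allpairsP => [[a w'] [_ /= /IH <- ->]].
Qed.

Lemma uniq_wordsLen k : uniq (wordsLen A k).
Proof.
elim: k => [|k IH] //=; apply: allpairs_uniq => //; first exact: enum_uniq.
by move=> [a w] [a' w'] _ _ /= [-> ->].
Qed.

Lemma uniq_words p : uniq (words g p).
Proof.
rewrite filter_uniq //; elim: (iota 0 p.+1) (iota_uniq 0 p.+1) => [|k ks IH] //=.
case/andP=> kks /IH uks; rewrite cat_uniq uniq_wordsLen uks andbT.
apply/hasPn => w /flattenP [_ /mapP [k' k'ks ->]] /size_wordsLen wk'.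
by apply/negP => /size_wordsLen wk; move: kks; rewrite -wk wk' k'ks.
Qed.

Lemma weight_words p w : w \in words g p -> weight g w = p.
Proof. by rewrite mem_filter => /andP [/eqP]. Qed.

Lemma leq_mul_size_weight e w : (forall a, (e <= g a)%N) -> (e * size w <= weight g w)%N.
Proof.
move=> eg; elim: w => [|a w IH] /=; first by rewrite muln0.
by rewrite /weight big_cons -/(weight g w) mulnS leq_add.
Qed.

Lemma size_words_gt0 p w : (0 < p)%N -> w \in words g p -> (0 < size w)%N.
Proof.
by move=> p_gt0 /weight_words; case: w => // wp; move: p_gt0; rewrite -wp /weight big_nil.
Qed.

End Words.

Section LeibnizCoefficients.
Variables (A : finType) (g : A -> nat) (c : A -> seq A -> bool).
Hypothesis g_neq1 : forall a, g a != 1%N.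

Lemma cnt_nil a : cnt g c a [::] = 0.
Proof. by rewrite /cnt /weight big_nil eq_sym (negbTE (g_neq1 a)). Qed.

Ltac dcoef_compute :=
  rewrite /dcoef !big_ord_recl !big_ord0 /=;
  rewrite !big_ord_recl !big_ord0 /bump /= -?eqseqE /= ?cnt_nil;
  rewrite ?(mul0r, mulr0, addr0, add0r, andbT, andbF, mul1r).

Lemma dcoef_size1 a v : (0 < size v < 3)%N ->
  dcoef g c [:: a] v = d1coef g c [:: a] v + deltacoef g c [:: a] v.
Proof. by case: v => [|b [|b' [|]]] //= _; dcoef_compute. Qed.

Lemma dcoef_size2 a1 a2 v : (0 < size v < 3)%N ->
  dcoef g c [:: a1; a2] v = d2coef g c [:: a1; a2] v.
Proof. by case: v => [|b [|b' [|]]] //= _; dcoef_compute. Qed.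

Lemma dcoef_size3 u v : size u = 3%N -> (0 < size v < 3)%N -> dcoef g c u v = 0.
Proof.
by case: u => [|a1 [|a2 [|a3 []]]] //= _; case: v => [|b [|b' [|]]] //= _; dcoef_compute.
Qed.

End LeibnizCoefficients.

Section ShortWords.
Variables (A : finType) (g : A -> nat) (c : A -> seq A -> bool) (e : nat).
Hypotheses (e_ge2 : (2 <= e)%N) (g_ge : forall a, (e <= g a)%N).

Local Notation sel k q := (@selmx _ 'F_2 [::] (words g q) (fun w : seq A => size w == k%N)).

Lemma size_words_lt p w k : (0 < p)%N -> (p < k * e)%N -> w \in words g p ->
  (0 < size w < k)%N.
Proof.
move=> p_gt0 p_lt wp; rewrite (size_words_gt0 p_gt0 wp) -(@ltn_pmul2l e) ?(leq_trans _ e_ge2) //.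
by rewrite (leq_ltn_trans (leq_mul_size_weight _ g_ge)) // (weight_words wp) mulnC.
Qed.

Lemma g_neq1 a : g a != 1%N.
Proof. by apply/eqP => ga1; have := leq_trans e_ge2 (g_ge a); rewrite ga1. Qed.

Lemma words_gt1 p w : w \in words g p -> w != [::] -> (1 < p)%N.
Proof.
case: w => // a w wp _; rewrite -(weight_words wp) /weight big_cons.
by rewrite (leq_trans e_ge2) // (leq_trans (g_ge a)) ?leq_addr.
Qed.

Lemma mul_sel1_Dfull q : (q < 3 * e)%N ->
  sel 1 q.+1 *m Dfull g c q.+1 q = dJ g c q.+1 q *m sel 1 q + deltaJ g c q.+1 q *m sel 2 q.
Proof.
move=> q_lt.
rewrite (mul_selmx_mx _ (uniq_words g q.+1) _ (fun u j => dcoef g c u (nth [::] (words g q) j))).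
rewrite (mul_mx_selmx _ (uniq_words g q) _ (fun i v => d1coef g c (nth [::] (words1 g q.+1) i) v)).
rewrite (mul_mx_selmx _ (uniq_words g q) _
  (fun i v => deltacoef g c (nth [::] (words1 g q.+1) i) v)).
apply/matrixP => i j; rewrite !mxE.
case/andP: (mem_nth_filter [::] i); case: (nth _ _ i) => [|a [|]] // _ /words_gt1/(_ isT).
move=> q_gt0; have v_size := size_words_lt q_gt0 q_lt (mem_nth [::] (ltn_ord j)).
rewrite (dcoef_size1 c g_neq1) //.
by case: (nth _ _ j) v_size => [|b [|b' [|]]] //= _; rewrite ?addr0 ?add0r.
Qed.

Lemma mul_sel2_Dfull q : (q < 3 * e)%N ->
  sel 2 q.+1 *m Dfull g c q.+1 q = dJ2 g c q.+1 q *m sel 2 q.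
Proof.
move=> q_lt.
rewrite (mul_selmx_mx _ (uniq_words g q.+1) _ (fun u j => dcoef g c u (nth [::] (words g q) j))).
rewrite (mul_mx_selmx _ (uniq_words g q) _ (fun i v => d2coef g c (nth [::] (words2 g q.+1) i) v)).
apply/matrixP => i j; rewrite !mxE.
case/andP: (mem_nth_filter [::] i); case: (nth _ _ i) => [|a1 [|a2 [|]]] // _.
move=> /words_gt1/(_ isT) q_gt0; have v_size := size_words_lt q_gt0 q_lt (mem_nth [::] (ltn_ord j)).
rewrite (dcoef_size2 c g_neq1) //.
by case: (nth _ _ j) v_size => [|b [|b' [|]]].
Qed.

Lemma orth_pair_sel q : orth_pair (sel 1 q) (sel 2 q).
Proof. by apply: orth_pair_selmx (uniq_words g q) _ _ _ => w _ /eqP ->. Qed.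

Lemma sel_span q : (0 < q)%N -> (q < 3 * e)%N ->
  (sel 1 q)^T *m sel 1 q + (sel 2 q)^T *m sel 2 q = 1%:M.
Proof.
move=> q_gt0 q_lt; apply: selmx_span (uniq_words g q) _ _ _ => w wq.
by case: w {wq} (size_words_lt q_gt0 q_lt wq) => [|a [|b [|]]].
Qed.

Lemma Dfull_sub_sel q : (0 < q)%N -> (q < 3 * e)%N ->
  (Dfull g c q.+1 q <= sel 1 q.+1 *m Dfull g c q.+1 q + sel 2 q.+1 *m Dfull g c q.+1 q)%MS.
Proof.
move=> q_gt0 q_lt; apply/row_subP => i; set u := nth [::] (words g q.+1) i.
have rowD (P : pred (seq A)) : P u ->
    (row i (Dfull g c q.+1 q) <= @selmx _ 'F_2 [::] (words g q.+1) P *m Dfull g c q.+1 q)%MS.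
  exact (row_sub_mul_selmx (fun v j => dcoef g c v (nth [::] (words g q) j)) (uniq_words g q.+1)).
have : (0 < size u < 4)%N.
  apply: size_words_lt (mem_nth [::] (ltn_ord i)) => //.
  by rewrite (leq_ltn_trans q_lt) // ltn_pmul2r ?(leq_trans _ e_ge2).
case/andP=> u_gt0; rewrite ltnS leq_eqVlt => /orP [/eqP u3 | u_lt3].
  suff -> : row i (Dfull g c q.+1 q) = 0 by apply: sub0mx.
  apply/rowP => j; rewrite !mxE (dcoef_size3 c g_neq1 u3) //.
  exact: size_words_lt q_gt0 q_lt (mem_nth [::] (ltn_ord j)).
case: (eqVneq (size u) 1%N) => [u1 | u_ne1].
  by apply: submx_trans (addsmxSl _ _); apply: rowD; rewrite /= u1.
apply: submx_trans (addsmxSr _ _); apply: rowD.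
by case: u u_gt0 u_lt3 u_ne1 => [|a [|b [|]]].
Qed.

End ShortWords.

Theorem mainTheorem13 (A : finType) (g : A -> nat) (c : A -> seq A -> bool)
    (e : nat) :
  (2 <= e)%N ->
  (forall a : A, (e <= g a)%N) ->
  (forall p : nat, Dfull g c p.+2 p.+1 *m Dfull g c p.+1 p = 0) ->
  forall p : nat, (1 <= p <= 3 * e - 1)%N ->
  LCHdim g c p = (kerDelta g c p + cokerDelta g c p.+1)%N.
Proof.
move=> e_ge2 g_ge DD [//|p] /andP [_ p_le].
have p1_lt : (p.+1 < 3 * e)%N.
  by rewrite (leq_ltn_trans p_le) // subn1 ltn_predL muln_gt0 (leq_trans _ e_ge2).
have p_lt := ltnW p1_lt; have p1_gt0 := ltn0Sn p.
exact: (mxrank_homology_block (orth_pair_sel g p.+1) (sel_span e_ge2 g_ge p1_gt0 p1_lt)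
  (orth_pair_sel g p) (mul_sel1_Dfull c e_ge2 g_ge p_lt) (mul_sel2_Dfull c e_ge2 g_ge p_lt)
  (mul_sel1_Dfull c e_ge2 g_ge p1_lt) (mul_sel2_Dfull c e_ge2 g_ge p1_lt)
  (Dfull_sub_sel c e_ge2 g_ge p1_gt0 p1_lt) (DD p)).
Qed.
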